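(* Let $x\ge y\ge 1$. The maximum possible number of orderings of the tasks in an $(x,y)$ task-dependency graph of order $n$ is: $n!$ for $n=x$ (in which case $x=y$); $\frac{(x+1)!}{x-y+2}$ for $n=x+1$; $\frac{(x+2)!}{2(x-y+2)}$ for $n=x+2$ and $y>1$; and $\frac{(x+2)!}{2(x-y+3)}$ for $n=x+2$ and $y=1$. Moreover, the maximum possible number of orderings of the tasks in a $(1,1)$ task-dependency graph of order $n$ is $(n-2)!$ for $n\ge 2$.
   Context: A task-dependency graph is a finite directed acyclic graph (no loops, no multiple edges) whose vertices are called tasks. A vertex is initial if it has in-degree $0$ and terminal if it has out-degree $0$ (an isolated vertex is both). An $(x,y)$ task-dependency graph has exactly $x$ initial and exactly $y$ terminal vertices. The order is the number of vertices. An ordering of the tasks is a linear ordering of all vertices such that for every edge $(u,v)$, $u$ precedes $v$ (a topological ordering). *)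

From mathcomp Require Import all_boot all_fingroup.
Set Implicit Arguments. Unset Strict Implicit. Unset Printing Implicit Defensive.

(* A task-dependency graph of order n: vertices 'I_n, directed edges given by
   a relation e (so no multiple edges), no loops, no directed cycles. *)
Definition is_dag (n : nat) (e : rel 'I_n) : Prop :=
  (forall v, ~~ e v v) /\ (forall u v, e u v -> ~~ connect e v u).

Definition initial_vertices (n : nat) (e : rel 'I_n) : {set 'I_n} :=
  [set v | [forall u, ~~ e u v]].
Definition terminal_vertices (n : nat) (e : rel 'I_n) : {set 'I_n} :=
  [set v | [forall u, ~~ e v u]].

Definition is_tdg (n x y : nat) (e : rel 'I_n) : Prop :=
  is_dag e /\ #|initial_vertices e| = x /\ #|terminal_vertices e| = y.

(* An ordering of the tasks: a bijection s assigning to each vertex its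
   position, such that every edge (u,v) has u before v. *)
Definition orderings (n : nat) (e : rel 'I_n) : {set {perm 'I_n}} :=
  [set s : {perm 'I_n} | [forall u, forall v, e u v ==> (s u < s v)]].

Definition is_max_orderings (n x y v : nat) : Prop :=
  (exists e : rel 'I_n, is_tdg x y e /\ #|orderings e| = v) /\
  (forall e : rel 'I_n, is_tdg x y e -> #|orderings e| <= v).

From mathcomp Require Import all_boot all_fingroup zify.
Set Implicit Arguments. Unset Strict Implicit. Unset Printing Implicit Defensive.

(* Left multiplication by the transposition of two vertices of [S] exchanges
   the permutations placing one or the other last among [S]; hence [n!/|S|]
   permutations place a given vertex of [S] last, and a second such constraint
   on a subset of [S] divides by the size of that subset too.
   When at most two vertices are non-initial, every edge ends in one of them
   and the terminal vertices are exactly those preceding neither.  The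
   orderings in which a given non-initial vertex comes last are then the
   permutations placing it last among both non-initial vertices and all their
   predecessors, and the other one last among its own predecessors.  This
   counts the orderings exactly in terms of the predecessor sets and the number
   of terminal vertices; optimising over the predecessor sets gives the bounds,
   attained by one or two fans.  In a (1,1) graph every vertex lies on a path
   from the source to the sink, so the source comes first and the sink last. *)

Definition extremal_in n (top : bool) (s : {perm 'I_n}) (S : {set 'I_n}) w :=
  [forall v in S, if top then s v <= s w else s w <= s v].

Notation last_in := (extremal_in true).
Notation first_in := (extremal_in false).

(** * Placing a vertex last among a set *)

Section Placement.

Variable n : nat.
Implicit Types (s p : {perm 'I_n}) (S T : {set 'I_n}) (Q : {set {perm 'I_n}}).

Lemma extremal_inP top s S w :
  reflect {in S, forall v, if top then s v <= s w else s w <= s v}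
          (extremal_in top s S w).
Proof. exact: forall_inP. Qed.

Lemma imset_tperm_sub S u v : u \in S -> v \in S -> tperm u v @: S \subset S.
Proof. by move=> uS vS; apply/subsetP => _ /imsetP [z zS ->]; case: tpermP => // -> //. Qed.

Lemma extremal_in_mulg top p s S w :
  p @: S \subset S -> extremal_in top (p * s)%g S w = extremal_in top s S (p w).
Proof.
move=> pS; have pSE : p @: S = S.
  by apply/eqP; rewrite eqEcard pS (card_imset _ (@perm_inj _ p)) leqnn.
apply/extremal_inP/extremal_inP => H v vS.
- by rewrite -pSE in vS; case/imsetP: vS => u uS ->; have := H u uS; rewrite !permM.
- by rewrite !permM; apply: H; rewrite -pSE imset_f.
Qed.

Lemma extremal_in_inj top s S w1 w2 : w1 \in S -> w2 \in S ->
  extremal_in top s S w1 -> extremal_in top s S w2 -> w1 = w2.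
Proof.
move=> w1S w2S /extremal_inP H1 /extremal_inP H2.
suff /perm_inj : s w1 = s w2 by [].
by apply/val_inj/anti_leq; have := H1 _ w2S; have := H2 _ w1S; case: top {H1 H2} => /= -> ->.
Qed.

Lemma card_extremal_in top s S w : w \in S ->
  #|[set v in S | extremal_in top s S v]| = 1.
Proof.
move=> wS; apply/eqP/cards1P.
have [v vS vext] : exists2 v, v \in S & extremal_in top s S v.
  case: top; [case: (arg_maxnP (fun i => val (s i)) wS)
             | case: (arg_minnP (fun i => val (s i)) wS)];
  by move=> v vS Hv; exists v => //; apply/extremal_inP.
exists v; apply/setP => u; rewrite !inE.
by apply/andP/eqP => [[uS uext] | ->]; [exact: extremal_in_inj uext vext | rewrite vS].
Qed.

Lemma card_extremal_in_stable top Q S w : w \in S ->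
  (forall u v s, u \in S -> v \in S -> ((tperm u v * s)%g \in Q) = (s \in Q)) ->
  #|[set s in Q | extremal_in top s S w]| * #|S| = #|Q|.
Proof.
move=> wS QS.
have fiber v : v \in S ->
    #|[set s in Q | extremal_in top s S v]| = #|[set s in Q | extremal_in top s S w]|.
  move=> vS; rewrite -(card_preimset _ (mulgI (tperm v w))); apply: eq_card => s.
  by rewrite !inE QS // extremal_in_mulg ?imset_tperm_sub // tpermL.
rewrite -[#|Q|]sum1_card (eq_bigr (fun s => #|[set v in S | extremal_in top s S v]|)); last first.
  by move=> s _; rewrite (card_extremal_in _ _ wS).
under eq_bigr do rewrite -sum1_card.
rewrite (exchange_big_dep (mem S)) /=; last by move=> s v _; rewrite inE => /andP[].
rewrite mulnC -sum_nat_const; apply: eq_bigr => v vS.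
by rewrite -(fiber v vS) -sum1_card; apply: eq_bigl => s; rewrite !inE vS.
Qed.

Lemma card_extremal_in_perm top S w : w \in S ->
  #|[set s | extremal_in top s S w]| * #|S| = n`!.
Proof.
move=> wS; rewrite -card_Sn -cardsT -(card_extremal_in_stable top (Q := setT) wS).
  by congr (_ * _); apply: eq_card => s; rewrite !inE.
by move=> *; rewrite !in_setT.
Qed.

Lemma card_last_in_extremal_in top S T w z : w \in S -> z \in T -> T \subset S :\ w ->
  #|[set s | last_in s S w && extremal_in top s T z]| * (#|T| * #|S|) = n`!.
Proof.
move=> wS zT /subsetP TS; rewrite mulnA -(card_extremal_in_perm true wS); congr (_ * _).
rewrite -(card_extremal_in_stable top (Q := [set s | last_in s S w]) zT) => [|u v s /TS uS /TS vS].
  by congr (_ * _); apply: eq_card => s; rewrite !inE.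
move: uS vS; rewrite !inE => /andP [uw uS] /andP [vw vS].
by rewrite extremal_in_mulg ?imset_tperm_sub // tpermD // eq_sym.
Qed.

End Placement.

Definition preds n (e : rel 'I_n) (v : 'I_n) : {set 'I_n} := [set u | e u v].

Section Orderings.

Variables (n : nat) (e : rel 'I_n).
Implicit Types (s : {perm 'I_n}).

Lemma initialP v : reflect (forall u, ~~ e u v) (v \in initial_vertices e).
Proof. by rewrite inE; apply: forallP. Qed.

Lemma initialPn v : reflect (exists u, e u v) (v \notin initial_vertices e).
Proof.
rewrite inE negb_forall; apply: (iffP existsP) => [] [u euv]; exists u => //.
  by rewrite -[e u v]negbK.
by rewrite euv.
Qed.

Lemma terminalP v : reflect (forall u, ~~ e v u) (v \in terminal_vertices e).
Proof. by rewrite inE; apply: forallP. Qed.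

Lemma terminal_vertices_preds (W : {set 'I_n}) : ~: initial_vertices e \subset W ->
  terminal_vertices e = ~: \bigcup_(w in W) preds e w.
Proof.
move=> /subsetP IW; apply/setP => v; rewrite in_setC; apply/terminalP/idP => [H | vU u].
  by apply/bigcupP => -[w _]; rewrite inE (negbTE (H w)).
apply/negP => evu; apply: (negP vU); apply/bigcupP; exists u; last by rewrite inE.
by apply: IW; rewrite in_setC; apply/initialPn; exists v.
Qed.

Lemma card_terminal_all_initial : #|initial_vertices e| = n -> #|terminal_vertices e| = n.
Proof.
move=> In; rewrite (terminal_vertices_preds (W := set0)) ?big_set0 ?setC0 ?cardsT ?card_ord //.
by rewrite subset0 -cards_eq0 cardsCs setCK In card_ord subnn.
Qed.

Lemma orderingsP s : reflect (forall u v, e u v -> s u < s v) (s \in orderings e).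
Proof.
rewrite inE; apply: (iffP forallP) => [H u v | H u]; first by move/forallP/(_ v)/implyP: (H u).
by apply/forallP => v; apply/implyP/H.
Qed.

Lemma card_orderings_leq : #|orderings e| <= n`!.
Proof. by rewrite -card_Sn max_card. Qed.

Lemma ordering_connect s u v : s \in orderings e -> connect e u v -> s u <= s v.
Proof.
move=> /orderingsP so /connectP [p pth ->] {v}.
by elim: p u pth => //= z p IH u /andP [/so /ltnW uz /IH]; apply: leq_trans.
Qed.

Lemma ordering_reaches_terminal s v : s \in orderings e ->
  exists2 t, t \in terminal_vertices e & connect e v t.
Proof.
move=> so; have [t vt tmax] := arg_maxnP (fun t => val (s t)) (connect0 e v).
exists t => //; apply/terminalP => u; apply/negP => etu.
by have := tmax u (connect_trans vt (connect1 etu)); rewrite /= leqNgt (orderingsP _ so).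
Qed.

Lemma ordering_reached_from_initial s v : s \in orderings e ->
  exists2 i, i \in initial_vertices e & connect e i v.
Proof.
move=> so; have [i iv imin] := arg_minnP (P := connect e^~ v) (fun i => val (s i)) (connect0 e v).
exists i => //; apply/initialP => u; apply/negP => eui.
by have := imin u (connect_trans (connect1 eui) iv); rewrite /= leqNgt (orderingsP _ so).
Qed.

Lemma dag_of_rank (r : 'I_n -> nat) : (forall u v, e u v -> r u < r v) -> is_dag e.
Proof.
move=> H; split=> [v | u v /H ruv]; first by apply/negP => /H; rewrite ltnn.
apply/negP => /connectP [p pth vu].
have rp z q : path e z q -> r z <= r (last z q).
  by elim: q z => //= z' q IH z /andP [/H /ltnW zz' /IH]; apply: leq_trans.
by have := rp _ _ pth; rewrite -vu leqNgt ruv.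
Qed.

Hypothesis dag : is_dag e.

Lemma dag_irrefl v : ~~ e v v.
Proof. by case: dag. Qed.

Lemma dag_asym u v : e u v -> ~~ e v u.
Proof. by case: dag => _ H /H; apply: contra => /connect1. Qed.

Lemma edge_noninitial u v : e u v -> v \in ~: initial_vertices e.
Proof. by move=> euv; rewrite in_setC; apply/initialPn; exists u. Qed.

Lemma card_preds_gt0 v : v \in ~: initial_vertices e -> 0 < #|preds e v|.
Proof. by rewrite in_setC => /initialPn [u euv]; apply/card_gt0P; exists u; rewrite inE. Qed.

Lemma mem_orderings_le s : (forall u v, e u v -> s u <= s v) -> s \in orderings e.
Proof.
move=> H; apply/orderingsP => u v euv; rewrite ltn_neqAle H // andbT.
by apply/eqP => /val_inj/perm_inj uv; move: euv; rewrite uv (negbTE (dag_irrefl v)).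
Qed.

(** * Graphs with one or two non-initial vertices *)

Lemma orderings_one_noninitial w : ~: initial_vertices e = [set w] ->
  orderings e = [set s | last_in s (w |: preds e w) w].
Proof.
move=> Iw; apply/setP => s; rewrite [in RHS]inE.
apply/idP/(extremal_inP true s (w |: preds e w) w) => [so v | H].
  by rewrite !inE => /predU1P [-> // | evw]; exact/ltnW/(orderingsP _ so).
apply: mem_orderings_le => u v euv.
have := edge_noninitial euv; rewrite Iw inE => /eqP vw; subst v.
by apply: H; rewrite !inE euv orbT.
Qed.

Lemma card_orderings_one_noninitial w : ~: initial_vertices e = [set w] ->
  #|orderings e| * (n - #|terminal_vertices e| + 1) = n`!.
Proof.
move=> Iw; rewrite (orderings_one_noninitial Iw).
rewrite -(card_extremal_in_perm true (setU11 w (preds e w))).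
rewrite (terminal_vertices_preds (W := [set w])) ?Iw // big_set1.
rewrite [#|~: _|]cardsCs setCK card_ord subKn; last by rewrite -[n in _ <= n]card_ord max_card.
by rewrite cardsU1 inE dag_irrefl addnC.
Qed.

Section TwoNoninitial.

Variables a b : 'I_n.
Hypotheses (Iab : ~: initial_vertices e = [set a; b]) (ab : a != b) (nba : ~~ e b a).

Let U := preds e a :|: preds e b.

Lemma orderings_before :
  [set s in orderings e | s a < s b] =
  [set s | last_in s ([set a; b] :|: U) b && last_in s (a |: preds e a) a].
Proof.
apply/setP => s; rewrite inE [in RHS]inE.
apply/andP/andP => [[so sab] | [/extremal_inP Hb /extremal_inP Ha]].
  split; apply/extremal_inP => v; rewrite !inE /=.
  - case/orP => [/orP [] /eqP -> // | /orP [eva | evb]]; first exact: ltnW.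
      exact: ltnW (ltn_trans (orderingsP _ so _ _ eva) sab).
    exact/ltnW/(orderingsP _ so).
  - by case/orP => [/eqP -> // | eva]; exact/ltnW/(orderingsP _ so).
split.
  apply: mem_orderings_le => u v euv.
  have := edge_noninitial euv; rewrite Iab !inE => /orP [] /eqP vE; subst v.
    by apply: Ha; rewrite !inE euv orbT.
  by apply: Hb; rewrite !inE euv !orbT.
rewrite ltn_neqAle Hb ?inE ?eqxx // andbT.
by apply: contra ab => /eqP/val_inj/perm_inj ->.
Qed.

Lemma card_orderings_before :
  #|[set s in orderings e | s a < s b]| * ((#|preds e a| + 1) * #|[set a; b] :|: U|) = n`!.
Proof.
rewrite orderings_before.
rewrite -(@card_last_in_extremal_in _ true ([set a; b] :|: U) (a |: preds e a) b a).
- by rewrite cardsU1 inE dag_irrefl addnC.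
- by rewrite !inE eqxx orbT.
- exact: setU11.
apply/subsetP => v; rewrite !inE => /orP [/eqP -> | eva]; first by rewrite ab eqxx.
by rewrite eva !orbT andbT; apply: contraNneq nba => <-.
Qed.

Lemma card_preds_noninitial_pair : #|U| = n - #|terminal_vertices e|.
Proof.
rewrite (terminal_vertices_preds (W := [set a; b])) ?Iab // big_setU1 ?big_set1 ?inE //.
by rewrite [#|~: _|]cardsCs setCK card_ord subKn // -[n in _ <= n]card_ord max_card.
Qed.

Lemma card_orderings_linked : e a b ->
  #|orderings e| * ((#|preds e a| + 1) * (n - #|terminal_vertices e| + 1)) = n`!.
Proof.
move=> eab; rewrite -card_orderings_before -card_preds_noninitial_pair.
have -> : [set s in orderings e | s a < s b] = orderings e.
  by apply/setP => s; rewrite inE andb_idr // => /orderingsP; apply.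
have -> : [set a; b] :|: U = b |: U.
  by apply/setP => v; rewrite !inE; case: eqVneq => [-> | _]; rewrite ?eab ?orbT.
by rewrite cardsU1 !inE negb_or nba dag_irrefl [true + _]addnC.
Qed.

End TwoNoninitial.

Lemma card_orderings_split a b : a != b ->
  #|orderings e| = #|[set s in orderings e | s a < s b]| + #|[set s in orderings e | s b < s a]|.
Proof.
move=> ab; rewrite -(cardsID [set s : {perm 'I_n} | s a < s b] (orderings e)).
congr (_ + _); apply: eq_card => s; rewrite !inE // andbC -leqNgt leq_eqVlt.
suff -> : (s b == s a :> nat) = false by [].
by apply/eqP => /val_inj/perm_inj baE; rewrite baE eqxx in ab.
Qed.

Section Unlinked.

Variables a b : 'I_n.
Hypotheses (Iab : ~: initial_vertices e = [set a; b]) (ab : a != b).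
Hypotheses (nab : ~~ e a b) (nba : ~~ e b a).

Lemma card_orderings_unlinked :
  #|orderings e| * ((#|preds e a| + 1) * (#|preds e b| + 1) * (n - #|terminal_vertices e| + 2))
  = n`! * (#|preds e a| + #|preds e b| + 2).
Proof.
have Iba : ~: initial_vertices e = [set b; a] by rewrite Iab setUC.
have Hab := card_orderings_before Iab ab nba.
have ba : b != a by rewrite eq_sym.
have Hba := card_orderings_before Iba ba nab.
have Sab : #|[set a; b] :|: (preds e a :|: preds e b)| = n - #|terminal_vertices e| + 2.
  rewrite -(card_preds_noninitial_pair Iab ab) -setUA cardsU1 cardsU1.
  by rewrite !inE !negb_or ab nab nba !dag_irrefl /= add1n addn2.
rewrite [[set b; a]]setUC [preds e b :|: _]setUC Sab in Hba; rewrite Sab in Hab.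
rewrite (card_orderings_split ab); nia.
Qed.

Lemma unlinked_terminal : 2 <= #|terminal_vertices e|.
Proof.
have <- : #|[set a; b]| = 2 by rewrite cards2 ab.
apply/subset_leq_card/subsetP => v vab.
apply/terminalP => u; apply/negP => evu; move: (edge_noninitial evu).
rewrite Iab => /set2P [] uE; case/set2P: vab => vE; subst u v.
all: by rewrite ?(negbTE (dag_irrefl _)) ?(negbTE nab) ?(negbTE nba) in evu.
Qed.

End Unlinked.

Lemma noninitial_pair : #|~: initial_vertices e| = 2 ->
  exists a b, [/\ ~: initial_vertices e = [set a; b], a != b & ~~ e b a].
Proof.
move/eqP/cards2P => [a [b [ab Iab]]]; have [eba | nba] := boolP (e b a); last by exists a, b.
by exists b, a; split; [rewrite Iab setUC | rewrite eq_sym | exact: dag_asym].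
Qed.

End Orderings.

(* [1/(p+1) + 1/(q+1) <= (m+2)/(2m)], cleared of denominators. *)
Lemma harmonic_pair_bound p q m : 0 < p -> 0 < q -> m <= p + q ->
  2 * m * (p + q + 2) <= (p + 1) * (q + 1) * (m + 2).
Proof.
move=> p0 q0 mpq; have pq1 : p + q <= p * q + 1 by nia.
have [pq_big | pq_small] := leqP (p + q + 3) (p * q); first by nia.
(* Otherwise RHS - LHS decreases in [m], so the case [m = p + q] suffices. *)
have : 0 <= (p + q - m) * (p + q + 3 - p * q) by [].
nia.
Qed.

Section Bounds.

Variables (n : nat) (e : rel 'I_n).
Hypotheses (dag : is_dag e) (I2 : #|~: initial_vertices e| = 2).

Lemma card_orderings_two_noninitial :
  #|orderings e| * (2 * (n - #|terminal_vertices e|)) <= n`!.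
Proof.
have [a [b [Iab ab nba]]] := noninitial_pair dag I2.
have p0 : 0 < #|preds e a| by apply: card_preds_gt0; rewrite Iab set21.
have [eab | nab] := boolP (e a b).
  rewrite -(card_orderings_linked dag Iab ab nba eab) leq_mul2l leq_mul ?orbT ?leq_addr //.
  by rewrite addn1.
have q0 : 0 < #|preds e b| by apply: card_preds_gt0; rewrite Iab set22.
have mpq : #|preds e a :|: preds e b| <= #|preds e a| + #|preds e b| by rewrite cardsU leq_subr.
rewrite (card_preds_noninitial_pair Iab ab) in mpq.
have count := card_orderings_unlinked dag Iab ab nab nba.
set p := #|preds e a| in p0 mpq count *; set q := #|preds e b| in q0 mpq count *.
set m := n - #|terminal_vertices e| in mpq count *.
have K0 : 0 < (p + 1) * (q + 1) * (m + 2) by rewrite !addn1 !addn2.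
rewrite -(leq_pmul2r K0) mulnAC count -mulnA leq_mul2l mulnC.
by rewrite harmonic_pair_bound ?orbT.
Qed.

Lemma card_orderings_two_noninitial_one_terminal :
  #|terminal_vertices e| = 1 -> #|orderings e| * (2 * n) <= n`!.
Proof.
move=> y1; have [a [b [Iab ab nba]]] := noninitial_pair dag I2.
have [eab | nab] := boolP (e a b); last by have := unlinked_terminal dag Iab ab nab nba; rewrite y1.
have p0 : 0 < #|preds e a| by apply: card_preds_gt0; rewrite Iab set21.
rewrite -(card_orderings_linked dag Iab ab nba eab) y1 leq_mul2l leq_mul ?orbT //.
  by rewrite addn1.
by rewrite subnK // (leq_ltn_trans _ (ltn_ord a)).
Qed.

End Bounds.

Lemma is_max_orderings_witness n x y v :
  (exists2 e : rel 'I_n, is_tdg x y e & v <= #|orderings e|) ->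
  (forall e : rel 'I_n, is_tdg x y e -> #|orderings e| <= v) ->
  is_max_orderings n x y v.
Proof.
move=> [e te ve] ub; split=> //; exists e; split=> //.
by apply/eqP; rewrite eqn_leq ve ub.
Qed.

Lemma is_max_orderings_scaled n x y c N : 0 < c ->
  (exists2 e : rel 'I_n, is_tdg x y e & N <= #|orderings e| * c) ->
  (forall e : rel 'I_n, is_tdg x y e -> #|orderings e| * c <= N) ->
  exists v, is_max_orderings n x y v /\ v * c = N.
Proof.
move=> c0 [e te Ne] ub; have eN : #|orderings e| * c = N by apply/eqP; rewrite eqn_leq Ne ub.
exists #|orderings e|; split=> //; apply: is_max_orderings_witness; first by exists e.
by move=> e' te'; rewrite -(leq_pmul2r c0) eN ub.
Qed.

Lemma card_noninitial_tdg n x y (e : rel 'I_n) : is_tdg x y e -> #|~: initial_vertices e| = n - x.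
Proof. by case=> _ [hI _]; rewrite [#|~: _|]cardsCs setCK card_ord hI. Qed.

Lemma card_ord_ltn n k : k <= n -> #|[set u : 'I_n | u < k]| = k.
Proof.
move=> kn; have widen_inj : injective (widen_ord kn) by move=> i j [] /val_inj.
rewrite -[k in RHS]card_ord -cardsT -(card_imset _ widen_inj).
apply: eq_card => u; rewrite inE; apply/idP/imsetP => [uk | [v _ ->] /=]; last exact: ltn_ord.
by exists (Ordinal uk) => //; apply: val_inj.
Qed.

Lemma max_orderings_all_initial x : is_max_orderings x x x x`!.
Proof.
apply: is_max_orderings_witness => [|e _]; last exact: card_orderings_leq.
pose e : rel 'I_x := [rel _ _ | false].
have allI : #|initial_vertices e| = x.
  by rewrite -[x in RHS]card_ord -cardsT; apply: eq_card => v; rewrite !inE; apply/forallP.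
exists e.
  by split; [exact: (dag_of_rank (r := fun=> 0)) | split; last exact: card_terminal_all_initial].
rewrite -card_Sn; apply/subset_leq_card/subsetP => s _; rewrite inE.
by apply/forallP => u; apply/forallP.
Qed.

Definition fan_graph x (k : nat) : rel 'I_x.+1 := [rel u v | (v == ord_max) && (u < k)].
Arguments fan_graph : clear implicits.

Lemma fan_graph_tdg x y : 1 <= y <= x -> is_tdg x y (fan_graph x (x - y + 1)).
Proof.
move=> /andP [y1 yx]; set k := x - y + 1.
have dag : is_dag (fan_graph x k).
  by apply: (dag_of_rank (r := val)) => u v /andP [/eqP -> uk] /=; lia.
have Iw : ~: initial_vertices (fan_graph x k) = [set ord_max].
  apply/setP => v; rewrite in_setC in_set1; apply/initialPn/eqP => [[u /andP [/eqP]] // | ->].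
  by exists ord0; rewrite /fan_graph /= eqxx /=; lia.
have Pw : preds (fan_graph x k) ord_max = [set u : 'I_x.+1 | u < k].
  by apply/setP => u; rewrite !inE /fan_graph /= eqxx.
split=> //; split; first by rewrite cardsCs Iw cards1 card_ord subn1.
rewrite (terminal_vertices_preds (W := [set ord_max])) ?Iw // big_set1 Pw.
by rewrite [#|~: _|]cardsCs setCK !card_ord card_ord_ltn; lia.
Qed.

Lemma card_orderings_tdg_succ x y (e : rel 'I_x.+1) : y <= x -> is_tdg x y e ->
  #|orderings e| * (x - y + 2) = x.+1`!.
Proof.
move=> yx te; have [dag [_ hT]] := te.
have /cards1P [w Iw] : #|~: initial_vertices e| == 1 by rewrite (card_noninitial_tdg te) subSnn.
by rewrite -(card_orderings_one_noninitial dag Iw) hT; congr (_ * _); lia.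
Qed.

Lemma max_orderings_one_noninitial x y : 1 <= y <= x ->
  exists v, is_max_orderings x.+1 x y v /\ v * (x - y + 2) = x.+1`!.
Proof.
move=> yx; have /andP [_ y_le_x] := yx.
apply: is_max_orderings_scaled; first by rewrite addn2.
  exists (fan_graph x (x - y + 1)); first exact: fan_graph_tdg.
  by rewrite card_orderings_tdg_succ //; exact: fan_graph_tdg.
by move=> e te; rewrite card_orderings_tdg_succ.
Qed.

(* For [m = x.+1] the two fans are linked by the edge [x -> x.+1]. *)
Definition two_fans_graph x (m : nat) : rel 'I_x.+2 :=
  [rel u v : 'I_x.+2 | (v == x :> nat) && (u == 0 :> nat) || (v == x.+1 :> nat) && (0 < u < m)].
Arguments two_fans_graph : clear implicits.

Section TwoFans.

Variables x m : nat.
Hypotheses (m_gt1 : 1 < m) (m_le : m <= x.+1).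

Local Notation e := (two_fans_graph x m).
Let a : 'I_x.+2 := Ordinal (leqnSn x.+1).

Let a_neq_max : a != ord_max.
Proof. by rewrite -val_eqE /= ltn_eqF. Qed.

Lemma two_fans_dag : is_dag e.
Proof. by apply: (dag_of_rank (r := val)) => u v; rewrite /two_fans_graph /=; lia. Qed.

Lemma two_fans_noninitial : ~: initial_vertices e = [set a; ord_max].
Proof.
apply/setP => v; rewrite in_setC in_set2 -!val_eqE /=; apply/initialPn/idP => [[u] | ].
  by rewrite /two_fans_graph /=; lia.
have m1 : 1 < x.+2 by lia.
case/orP => /eqP vE; [exists ord0 | exists (Ordinal m1)]; rewrite /two_fans_graph /=; lia.
Qed.

Lemma two_fans_preds_a : preds e a = [set ord0].
Proof. by apply/setP => u; rewrite !inE -val_eqE /two_fans_graph /=; lia. Qed.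

Lemma two_fans_preds_max : preds e ord_max = [set u : 'I_x.+2 | u < m] :\ ord0.
Proof. by apply/setP => u; rewrite !inE -val_eqE /two_fans_graph /=; lia. Qed.

Lemma two_fans_terminal : #|terminal_vertices e| = x.+2 - m.
Proof.
have := card_preds_noninitial_pair two_fans_noninitial a_neq_max.
rewrite two_fans_preds_a two_fans_preds_max setD1K ?inE; last exact: ltnW m_gt1.
rewrite card_ord_ltn; last by lia.
by have := max_card (mem (terminal_vertices e)); rewrite card_ord; lia.
Qed.

Lemma two_fans_tdg : is_tdg x (x.+2 - m) e.
Proof.
split; first exact: two_fans_dag.
split; last exact: two_fans_terminal.
by rewrite cardsCs two_fans_noninitial cards2 card_ord a_neq_max subn2.
Qed.

Lemma card_orderings_two_fans_linked : m = x.+1 -> #|orderings e| * (2 * x.+2) = x.+2`!.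
Proof.
move=> mE; have eab : e a ord_max by rewrite /two_fans_graph /=; lia.
have nba : ~~ e ord_max a by rewrite /two_fans_graph /=; lia.
rewrite -(card_orderings_linked two_fans_dag two_fans_noninitial a_neq_max nba eab).
by rewrite two_fans_preds_a cards1 two_fans_terminal mE; congr (_ * _); lia.
Qed.

Lemma card_orderings_two_fans_unlinked : m <= x -> #|orderings e| * (2 * m) = x.+2`!.
Proof.
move=> mx; have nab : ~~ e a ord_max by rewrite /two_fans_graph /=; lia.
have nba : ~~ e ord_max a by rewrite /two_fans_graph /=; lia.
have q : #|[set u : 'I_x.+2 | u < m] :\ ord0| = m.-1.
  by have := cardsD1 ord0 [set u : 'I_x.+2 | u < m]; rewrite card_ord_ltn ?inE /=; lia.
have := card_orderings_unlinked two_fans_dag two_fans_noninitial a_neq_max nab nba.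
rewrite two_fans_preds_a two_fans_preds_max cards1 q two_fans_terminal.
have -> : (1 + 1) * (m.-1 + 1) * (x.+2 - (x.+2 - m) + 2) = 2 * m * (m + 2) by lia.
have -> : 1 + m.-1 + 2 = m + 2 by lia.
by move/eqP; rewrite mulnA eqn_pmul2r ?addn2 // => /eqP.
Qed.

End TwoFans.

Lemma max_orderings_two_noninitial x y : 1 < y <= x ->
  exists v, is_max_orderings x.+2 x y v /\ v * (2 * (x - y + 2)) = x.+2`!.
Proof.
move=> /andP [y1 yx]; apply: is_max_orderings_scaled; first by rewrite muln_gt0 addn2.
  exists (two_fans_graph x (x - y + 2)); last by rewrite card_orderings_two_fans_unlinked //; lia.
  have := @two_fans_tdg x (x - y + 2).
  have -> : x.+2 - (x - y + 2) = y by lia.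
  by apply; lia.
move=> e te; have [dag [_ hT]] := te.
have I2 : #|~: initial_vertices e| = 2 by rewrite (card_noninitial_tdg te); lia.
have := card_orderings_two_noninitial dag I2; rewrite hT.
by have -> : x.+2 - y = x - y + 2 by lia.
Qed.

Lemma max_orderings_two_noninitial_one_terminal x : 0 < x ->
  exists v, is_max_orderings x.+2 x 1 v /\ v * (2 * (x - 1 + 3)) = x.+2`!.
Proof.
move=> x0; have -> : x - 1 + 3 = x.+2 by lia.
apply: is_max_orderings_scaled => //.
  exists (two_fans_graph x x.+1); last by rewrite card_orderings_two_fans_linked.
  by have := @two_fans_tdg x x.+1; rewrite subSnn; apply.
move=> e te; have [dag [_ hT]] := te.
have I2 : #|~: initial_vertices e| = 2 by rewrite (card_noninitial_tdg te); lia.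
exact: card_orderings_two_noninitial_one_terminal.
Qed.

(** * Graphs with one initial and one terminal vertex *)

Definition first_last_perms n (i t : 'I_n) : {set {perm 'I_n}} :=
  [set s | last_in s setT t && first_in s (~: [set t]) i].

Lemma card_first_last_perms k (i t : 'I_k.+2) : i != t -> #|first_last_perms i t| = k`!.
Proof.
move=> it; have iT : i \in ~: [set t] by rewrite !inE.
have := card_last_in_extremal_in false (in_setT t) iT.
rewrite setTD subxx cardsC1 cardsT card_ord !factS /= => /(_ isT) count.
apply/eqP; rewrite -(eqn_pmul2r (_ : 0 < k.+1 * k.+2)) // /first_last_perms count.
by rewrite mulnCA mulnA [k`! * _]mulnC.
Qed.

Lemma ordering_between_source_sink n (e : rel 'I_n) i t s :
  initial_vertices e = [set i] -> terminal_vertices e = [set t] ->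
  s \in orderings e -> forall v, s i <= s v <= s t.
Proof.
move=> Ii Tt so v; apply/andP; split.
  have [i' + iv] := ordering_reached_from_initial v so; rewrite Ii inE => /eqP <-.
  exact: ordering_connect so iv.
have [t' + vt] := ordering_reaches_terminal v so; rewrite Tt inE => /eqP <-.
exact: ordering_connect so vt.
Qed.

Lemma card_orderings_source_sink k (e : rel 'I_k.+2) : is_tdg 1 1 e -> #|orderings e| <= k`!.
Proof.
case=> _ [/eqP/cards1P [i Ii] /eqP/cards1P [t Tt]].
have between := ordering_between_source_sink Ii Tt.
have [itE | it] := eqVneq i t.
  subst t; suff -> : orderings e = set0 by rewrite cards0.
  apply/setP => s; rewrite in_set0; apply/negbTE/negP => so.
  have /andP [h0 h0'] := between s so ord0; have /andP [h1 h1'] := between s so ord_max.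
  suff /perm_inj : s ord0 = s ord_max by [].
  by apply/val_inj => /=; lia.
rewrite -(card_first_last_perms it); apply/subset_leq_card/subsetP => s so.
by rewrite inE; apply/andP; split; apply/extremal_inP => v _; have /andP [] := between s so v.
Qed.

Definition source_sink_graph k : rel 'I_k.+2 :=
  [rel u v | (u == ord0) && (v != ord0) || (v == ord_max) && (u != ord_max)].
Arguments source_sink_graph : clear implicits.

Lemma max_orderings_source_sink k : is_max_orderings k.+2 1 1 k`!.
Proof.
apply: is_max_orderings_witness; last by move=> e; exact: card_orderings_source_sink.
set e := source_sink_graph k.
have dag : is_dag e.
  apply: (dag_of_rank (r := val)) => u v; rewrite /e /source_sink_graph /=.
  case/orP => [/andP [/eqP -> v0] | /andP [/eqP -> um]]; first by rewrite lt0n.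
  by rewrite ltn_neqAle -ltnS ltn_ord andbT.
exists e.
  split=> //; split; apply/eqP/cards1P.
    exists ord0; apply/setP => v; rewrite inE; apply/initialP/eqP => [H | -> u].
      by apply/eqP; apply: contraNT (H ord0) => v0; rewrite /e /source_sink_graph /= v0.
    by rewrite /e /source_sink_graph /= andbF.
  exists ord_max; apply/setP => v; rewrite inE; apply/terminalP/eqP => [H | -> u].
    by apply/eqP; apply: contraNT (H ord_max) => vm; rewrite /e /source_sink_graph /= eqxx vm orbT.
  by rewrite /e /source_sink_graph /= eqxx andbF.
have o0m : (ord0 : 'I_k.+2) != ord_max by [].
rewrite -(card_first_last_perms o0m); apply/subset_leq_card/subsetP => s.
rewrite inE => /andP [/extremal_inP s_last /extremal_inP s_first].
apply: (@mem_orderings_le _ e dag s) => u v.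
rewrite /e /source_sink_graph /=.
case/orP => [/andP [/eqP -> v0] | /andP [/eqP -> _]]; last exact: s_last.
by case: (eqVneq v ord_max) => [-> | vm]; [apply: s_last | apply: s_first; rewrite !inE].
Qed.

Theorem mainTheorem20 :
  (forall x y : nat, 1 <= y <= x ->
     (* n = x: necessarily x = y, and the maximum is n! *)
     (forall e : rel 'I_x, is_tdg x y e -> y = x) /\
     (y = x -> is_max_orderings x x y (x`!)) /\
     (* n = x + 1 *)
     (exists v, is_max_orderings x.+1 x y v /\ v * (x - y + 2) = (x.+1)`!) /\
     (* n = x + 2, y > 1 *)
     (1 < y -> exists v, is_max_orderings x.+2 x y v /\
                         v * (2 * (x - y + 2)) = (x.+2)`!) /\
     (* n = x + 2, y = 1 *)
     (y = 1 -> exists v, is_max_orderings x.+2 x y v /\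
                         v * (2 * (x - y + 3)) = (x.+2)`!)) /\
  (forall n : nat, 2 <= n -> is_max_orderings n 1 1 ((n - 2)`!)).
Proof.
split; last by case=> [|[|k]] // _; rewrite !subSS subn0; exact: max_orderings_source_sink.
move=> x y /andP [y1 yx]; split.
  by move=> e [_ [hI hT]]; rewrite -hT card_terminal_all_initial.
split; first by move=> ->; exact: max_orderings_all_initial.
split; first by apply: max_orderings_one_noninitial; rewrite y1.
split; first by move=> y_gt1; apply: max_orderings_two_noninitial; rewrite y_gt1.
by move=> y_eq1; subst y; exact: max_orderings_two_noninitial_one_terminal.
Qed.
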